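(* Let $p$ be a prime, $\sigma:\mathcal A_m\to\mathcal A_m^*$ a $p$-uniform morphism, $t\in\mathbb{N}^*$, $r=p^t$, and $\alpha\in\mathbb{F}_r$. Then for every positive integer $k$, $$M_{\sigma^{kt}}(\alpha)=\big(M_{\sigma^t}(\alpha)\big)^k.$$
   Context: $\mathcal A_m=\{0,\dots,m-1\}$. For $W=w_0\cdots w_{r'-1}\in\mathcal A_m^*$ and $j\in\mathcal A_m$, $\beta_{W,j}(T)=\sum_{i:\,w_i=j}T^{r'-1-i}\in\mathbb{F}_p[T]$ (zero if $j$ does not occur). For a uniform morphism $\tau$ on $\mathcal A_m$, $M_\tau(T)=(\beta_{\tau(i),j}(T))_{0\le i,j\le m-1}$, and $M_\tau(\alpha)$ is its evaluation at $T=\alpha$. *)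

From HB Require Import structures.
From mathcomp Require Import all_boot all_order all_algebra all_field.
Set Implicit Arguments. Unset Strict Implicit. Unset Printing Implicit Defensive.
Import GRing.Theory.
Local Open Scope ring_scope.

(* Alphabet A_m = 'I_m ; words are seq 'I_m ; a morphism is its letter images. *)
Definition morph_word (m : nat) (tau : 'I_m -> seq 'I_m) (w : seq 'I_m) : seq 'I_m :=
  flatten (map tau w).

Definition morph_iter (m : nat) (tau : 'I_m -> seq 'I_m) (n : nat) : 'I_m -> seq 'I_m :=
  fun i => iter n (morph_word tau) [:: i].

Definition uniform (m : nat) (k : nat) (tau : 'I_m -> seq 'I_m) : Prop :=
  forall i, size (tau i) = k.

Definition beta (p m : nat) (W : seq 'I_m) (j : 'I_m) : {poly 'F_p} :=
  \sum_(i < size W | nth j W i == j) 'X^(size W - 1 - i).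

Definition Mtau (p m : nat) (tau : 'I_m -> seq 'I_m) : 'M[{poly 'F_p}]_m :=
  \matrix_(i < m, j < m) beta p (tau i) j.

(* Evaluation of a polynomial of F_p[T] at alpha in a field F of characteristic p,
   via the canonical embedding F_p -> F (c |-> c%:R). *)
Definition evalFp (p : nat) (F : fieldType) (P : {poly 'F_p}) (alpha : F) : F :=
  (map_poly (fun c : 'F_p => (nat_of_ord c)%:R) P).[alpha].

Definition Mtau_at (p m : nat) (F : fieldType) (tau : 'I_m -> seq 'I_m) (alpha : F)
  : 'M[F]_m :=
  map_mx (fun P => evalFp P alpha) (Mtau p tau).

(* beta is additive along concatenation up to a shift by a power of T:
   beta_{UV,j} = beta_{U,j} T^|V| + beta_{V,j}.  Hence for an l-uniform
   morphism rho, M_{rho o tau}(T) = M_tau(T^l) M_rho(T) over F_p[T].  In a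
   field F of characteristic p, evaluation at alpha is a ring morphism on
   F_p[T], so M_{rho o tau}(alpha) = M_tau(alpha^l) M_rho(alpha).  With
   rho = sigma^t, which is p^t-uniform, and alpha^(p^t) = alpha since
   #|F| = p^t, this reads M_{sigma^((k+1)t)}(alpha) = M_{sigma^(kt)}(alpha)
   M_{sigma^t}(alpha), and the theorem follows by induction on k. *)

From HB Require Import structures.
From mathcomp Require Import all_boot all_order all_algebra all_field.
Local Open Scope ring_scope.
Import GRing.Theory.
Set Implicit Arguments.
Unset Strict Implicit.

Section Morphisms.
Variable m : nat.

Lemma morph_word_cat (tau : 'I_m -> seq 'I_m) (A B : seq 'I_m) :
  morph_word tau (A ++ B) = morph_word tau A ++ morph_word tau B.
Proof. by rewrite /morph_word map_cat flatten_cat. Qed.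

Lemma size_morph_word (tau : 'I_m -> seq 'I_m) l W :
  uniform l tau -> size (morph_word tau W) = (l * size W)%N.
Proof.
move=> tau_l; elim: W => [|w W IH] //=; first by rewrite muln0.
by rewrite /morph_word /= size_cat -/(morph_word tau W) IH tau_l mulnS.
Qed.

End Morphisms.

Section Iterates.
Variables (m : nat) (sigma : 'I_m -> seq 'I_m).

Lemma iter_morph_word_cat n (A B : seq 'I_m) :
  iter n (morph_word sigma) (A ++ B) =
  iter n (morph_word sigma) A ++ iter n (morph_word sigma) B.
Proof. by elim: n => //= n ->; rewrite morph_word_cat. Qed.

Lemma iter_morph_word n (W : seq 'I_m) :
  iter n (morph_word sigma) W = morph_word (morph_iter sigma n) W.
Proof.
elim: W => [|w W IH]; first by elim: n => //= n ->.
by rewrite -cat1s iter_morph_word_cat IH.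
Qed.

Lemma morph_iterD n t (i : 'I_m) :
  morph_iter sigma (n + t) i = morph_word (morph_iter sigma t) (morph_iter sigma n i).
Proof. by rewrite /morph_iter addnC iterD iter_morph_word. Qed.

Lemma uniform_morph_iter l n : uniform l sigma -> uniform (l ^ n) (morph_iter sigma n).
Proof.
move=> sigma_l i; elim: n => [|n IH] //=.
by rewrite (size_morph_word _ sigma_l) IH expnS.
Qed.

End Iterates.

Section BetaPolynomials.
Variables (p m : nat).

Lemma beta_nil (j : 'I_m) : beta p [::] j = 0.
Proof. by rewrite /beta big_ord0. Qed.

Lemma beta_cons (w : 'I_m) W j :
  beta p (w :: W) j = (if w == j then 'X^(size W) else 0) + beta p W j.
Proof.
rewrite /beta !(big_mkcond (fun i : 'I_ _ => _ == j)) big_ord_recl /= subn0 subn1.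
congr (_ + _); apply: eq_bigr => i _ /=.
by rewrite add0n /bump leq0n add1n subnS subnAC subn1.
Qed.

Lemma beta_cat (V1 V2 : seq 'I_m) j :
  beta p (V1 ++ V2) j = beta p V1 j * 'X^(size V2) + beta p V2 j.
Proof.
elim: V1 => [|w V1 IH] /=; first by rewrite beta_nil mul0r add0r.
rewrite !beta_cons IH size_cat mulrDl addrA exprD.
by case: (w == j); rewrite ?mul0r.
Qed.

Lemma beta_morph_word (tau : 'I_m -> seq 'I_m) l U j :
  uniform l tau ->
  beta p (morph_word tau U) j = \sum_i (beta p U i \Po 'X^l) * beta p (tau i) j.
Proof.
move=> tau_l; elim: U => [|u U IH].
  by rewrite beta_nil big1 // => i _; rewrite beta_nil comp_poly0 mul0r.
rewrite (_ : morph_word tau (u :: U) = tau u ++ morph_word tau U) //.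
rewrite beta_cat IH (size_morph_word _ tau_l).
under [RHS]eq_bigr do rewrite beta_cons comp_polyD mulrDl.
rewrite big_split /=; congr (_ + _).
rewrite (bigD1 u) //= eqxx big1 ?addr0 => [|i]; last first.
  by rewrite eq_sym => /negbTE ->; rewrite comp_poly0 mul0r.
by rewrite comp_Xn_poly -exprM mulrC.
Qed.

Lemma Mtau_morph_word (tau rho : 'I_m -> seq 'I_m) l :
  uniform l rho ->
  Mtau p (fun i => morph_word rho (tau i)) =
  map_mx (comp_poly 'X^l) (Mtau p tau) *m Mtau p rho.
Proof.
move=> rho_l; apply/matrixP=> i j; rewrite !mxE (beta_morph_word _ _ rho_l).
by apply: eq_bigr => k _; rewrite !mxE.
Qed.

End BetaPolynomials.

Section EvaluationInCharacteristicP.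
Variables (p : nat) (F : fieldType).
Hypothesis pcharFp : p \in [pchar F].

Definition Fp_to_pchar (c : 'F_p) : F := (nat_of_ord c)%:R.

(* [(Zp_trunc (pdiv p)).+2] is the modulus underlying ['F_p]. *)
Lemma natr_mod_Fp n : (n %% (Zp_trunc (pdiv p)).+2)%:R = n%:R :> F.
Proof. by rewrite Fp_cast ?(pcharf_prime pcharFp) // GRing.natr_mod_pchar. Qed.

Lemma Fp_to_pchar_is_nmod_morphism : nmod_morphism Fp_to_pchar.
Proof. by split=> // a b; rewrite /Fp_to_pchar /= natr_mod_Fp natrD. Qed.

Lemma Fp_to_pchar_is_monoid_morphism : monoid_morphism Fp_to_pchar.
Proof. by split=> [|a b]; rewrite /Fp_to_pchar /= natr_mod_Fp ?natrM. Qed.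

HB.instance Definition _ := GRing.isNmodMorphism.Build _ _ Fp_to_pchar
  Fp_to_pchar_is_nmod_morphism.
HB.instance Definition _ := GRing.isMonoidMorphism.Build _ _ Fp_to_pchar
  Fp_to_pchar_is_monoid_morphism.

Lemma Mtau_atE m (tau : 'I_m -> seq 'I_m) (x : F) :
  Mtau_at p tau x = map_mx (horner_eval x \o map_poly Fp_to_pchar) (Mtau p tau).
Proof. by []. Qed.

Lemma Mtau_at_morph_word m (tau rho : 'I_m -> seq 'I_m) l (x : F) :
  uniform l rho ->
  Mtau_at p (fun i => morph_word rho (tau i)) x =
  Mtau_at p tau (x ^+ l) *m Mtau_at p rho x.
Proof.
move=> rho_l; rewrite !Mtau_atE (Mtau_morph_word p tau rho_l) map_mxM -map_mx_comp.
congr (_ *m _); apply: eq_map_mx => P /=.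
by rewrite /horner_eval map_comp_poly horner_comp map_polyXn hornerXn.
Qed.

End EvaluationInCharacteristicP.

Lemma eq_Mtau_at p m (F : fieldType) (tau tau' : 'I_m -> seq 'I_m) (x : F) :
  tau =1 tau' -> Mtau_at p tau x = Mtau_at p tau' x.
Proof. by move=> eq_tau; apply/matrixP=> i j; rewrite !mxE eq_tau. Qed.

Theorem proposition4p14 (p : nat) (m : nat) (sigma : 'I_m -> seq 'I_m) (t : nat)
  (F : finFieldType) (alpha : F) :
  prime p -> uniform p sigma -> (0 < t)%N -> #|F| = (p ^ t)%N ->
  forall k : nat, (0 < k)%N ->
    Mtau_at p (morph_iter sigma (k * t)) alpha = (Mtau_at p (morph_iter sigma t) alpha) ^+ k.
Proof.
move=> p_prime sigma_p _ cardF.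
have pcharFp : p \in [pchar F] := card_finPcharP cardF p_prime.
have sigma_t := uniform_morph_iter t sigma_p.
have alpha_fixed : alpha ^+ (p ^ t) = alpha by rewrite -cardF expf_card.
elim=> // -[_ _|k IH _]; first by rewrite mul1n expr1.
rewrite mulSnr (eq_Mtau_at p alpha (morph_iterD sigma _ t)).
by rewrite (Mtau_at_morph_word pcharFp _ _ sigma_t) alpha_fixed IH // [RHS]exprSr mulmxE.
Qed.
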